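(* With the conventions $g(0)=h(0)=g_1(0)=h_1(0)=0$, for all $M\geq 2$: $$g(M)=g(M-1)+g(M-2)+F_{M-1},\qquad h(M)=h(M-1)+h(M-2)+F_{M-2},$$ $$g_1(M)=g_1(M-1)+g_1(M-2)+F_{M-1},\qquad h_1(M)=h_1(M-1)+h_1(M-2)+F_{M-1}.$$
   Context: $F_k$ denotes the Fibonacci numbers with $F_{-1}=1$, $F_0=0$, $F_1=1$, $F_k=F_{k-1}+F_{k-2}$. The perimeter of a nonempty partition $\lambda$ with largest part $\lambda_1$ and $\ell(\lambda)$ parts is $\lambda_1+\ell(\lambda)-1$. $\mathcal G(M)$ is the set of partitions into odd parts with perimeter $M$, $\mathcal H(M)$ the set of partitions into distinct parts with perimeter $M$; $g(M)$ (resp. $h(M)$) is the total number of parts, summed over all partitions in $\mathcal G(M)$ (resp. $\mathcal H(M)$). $\mathcal G_1(M)$ is the set of partitions with perimeter $M$ in which exactly one distinct even integer occurs as a part (possibly with multiplicity greater than one) and all other parts are odd; $\mathcal H_1(M)$ is the set of partitions with perimeter $M$ in which exactly one part value occurs at least twice and every other part value occurs exactly once. $g_1(M)=|\mathcal G_1(M)|$, $h_1(M)=|\mathcal H_1(M)|$. *)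

From mathcomp Require Import all_boot.
Set Implicit Arguments. Unset Strict Implicit. Unset Printing Implicit Defensive.

Fixpoint fib (n : nat) : nat :=
  match n with 0 => 0 | 1 => 1 | (m.+1 as k).+1 => fib k + fib m end.

Definition is_partition (s : seq nat) : bool :=
  sorted geq s && all (fun x => 0 < x) s.

Definition perimeter (s : seq nat) : nat := head 0 s + size s - 1.

Fixpoint seqs_upto (k b : nat) : seq (seq nat) :=
  match k with
  | 0 => [:: [::]]
  | k'.+1 => [::] :: [seq x :: s | x <- iota 1 b, s <- seqs_upto k' b]
  end.

(* all nonempty partitions of perimeter M (a partition of perimeter M has
   largest part <= M and at most M parts, so the enumeration is complete) *)
Definition parts_perim (M : nat) : seq (seq nat) :=
  [seq s <- seqs_upto M M | [&& s != [::], is_partition s & perimeter s == M]].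

Definition in_G (s : seq nat) : bool := all odd s.
Definition in_H (s : seq nat) : bool := uniq s.
(* G_1(M): exactly one distinct even value occurs, all other parts odd *)
Definition in_G1 (s : seq nat) : bool :=
  size (undup [seq x <- s | ~~ odd x]) == 1.
(* H_1(M): exactly one part value occurs at least twice, others exactly once *)
Definition in_H1 (s : seq nat) : bool :=
  count (fun v => 1 < count_mem v s) (undup s) == 1.

Definition g (M : nat) : nat := sumn [seq size s | s <- parts_perim M & in_G s].
Definition h (M : nat) : nat := sumn [seq size s | s <- parts_perim M & in_H s].
Definition g1 (M : nat) : nat := size [seq s <- parts_perim M | in_G1 s].
Definition h1 (M : nat) : nat := size [seq s <- parts_perim M | in_H1 s].

From mathcomp Require Import all_boot.
From mathcomp Require Import zify.
Set Implicit Arguments. Unset Strict Implicit. Unset Printing Implicit Defensive.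

(* Every partition of perimeter M + 2 arises in exactly one way from a
   partition t of perimeter M + 1: either by appending a part 1 to t, or by
   adding 1 to every part of t (the case where the smallest part exceeds 1).
   Summing a weight over all partitions of a given perimeter therefore splits
   into two sums at the previous perimeter, and for each of the four
   statistics one more such split separates the cases where the weight is
   preserved from those where it vanishes or changes.  The correction terms
   are counts of partitions (into odd parts, into distinct parts, ...) that
   satisfy a plain Fibonacci recurrence. *)

Fixpoint perim_enum (n : nat) : seq (seq nat) :=
  match n with
  | 0 => [::]
  | 1 => [:: [:: 1]]
  | (m.+1 as k).+1 =>
      [seq rcons s 1 | s <- perim_enum k] ++ [seq map succn s | s <- perim_enum k]
  end.

Lemma perim_enumSS n :
  perim_enum n.+2 =
  [seq rcons s 1 | s <- perim_enum n.+1] ++ [seq map succn s | s <- perim_enum n.+1].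
Proof. by []. Qed.

Definition perim_part (n : nat) (s : seq nat) : bool :=
  [&& s != [::], is_partition s & perimeter s == n].

Lemma perim_part_pos n s : perim_part n s -> all (fun x => 0 < x) s.
Proof. by case/and3P=> _ /andP[]. Qed.

Lemma sorted_geq_map_succn (s : seq nat) : sorted geq (map succn s) = sorted geq s.
Proof. by apply: mono_sorted => x y /=; rewrite ltnS. Qed.

Lemma sorted_geq_rcons1 (s : seq nat) :
  all (fun x => 0 < x) s -> sorted geq (rcons s 1) = sorted geq s.
Proof.
case: s => [|x s] // s_pos; rewrite /= rcons_path.
by have /(allP s_pos) := mem_last x s; case: path.
Qed.

Lemma perim_part_rcons1 n s : perim_part n s -> perim_part n.+1 (rcons s 1).
Proof.
case: s => [|x s] // /and3P[_ /andP[s_sorted s_pos] /eqP <-].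
apply/and3P; split => //.
  by rewrite /is_partition sorted_geq_rcons1 // s_sorted all_rcons s_pos.
by rewrite /perimeter /= size_rcons; move: s_pos => /andP[x_pos _]; lia.
Qed.

Lemma perim_part_map_succn n s : perim_part n s -> perim_part n.+1 (map succn s).
Proof.
case: s => [|x s] // /and3P[_ /andP[s_sorted s_pos] /eqP <-].
apply/and3P; split => //.
  by rewrite /is_partition sorted_geq_map_succn s_sorted all_map; apply/allP.
by rewrite /perimeter /= size_map; move: s_pos => /andP[x_pos _]; lia.
Qed.

Lemma perim_partSS_inv n s : perim_part n.+2 s ->
  (exists2 t, perim_part n.+1 t & s = rcons t 1) \/
  (exists2 t, perim_part n.+1 t & s = map succn t).
Proof.
case/lastP: s => [|t y] // /and3P[_ /andP[s_sorted]].
rewrite all_rcons => /andP[y_pos t_pos] /eqP s_perim.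
have t_ge_y : all (fun x => y <= x) t.
  move: s_sorted; rewrite -rev_sorted rev_rcons /= => /(order_path_min leq_trans).
  by rewrite all_rev.
have [t0 | t_nil] := eqVneq t [::].
  right; exists [:: y.-1]; last by rewrite t0 /= prednK.
  by move: s_perim; rewrite t0 /perim_part /is_partition /perimeter /= andbT; lia.
have [y1 | y_gt1] := eqVneq y 1.
  subst y; left; exists t => //; apply/and3P; split => //.
    by rewrite /is_partition -sorted_geq_rcons1 // s_sorted t_pos.
  move: s_perim; case: t t_nil {s_sorted t_pos t_ge_y} => [|x t] //= _.
  by rewrite /perimeter /= size_rcons; lia.
have s_gt1 : all (fun x => 1 < x) (rcons t y).
  rewrite all_rcons; apply/andP; split; first lia.
  by apply/allP => x /(allP t_ge_y) /=; lia.
have predK : map succn (map predn (rcons t y)) = rcons t y.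
  rewrite -map_comp -[RHS]map_id; apply/eq_in_map => x /(allP s_gt1) /=.
  by case: x.
right; exists (map predn (rcons t y)) => //; apply/and3P; split.
- by case: (t) t_nil.
- rewrite /is_partition -sorted_geq_map_succn predK s_sorted /= all_map.
  by apply/allP => x /(allP s_gt1) /=; lia.
- move: s_perim s_gt1; case: t t_nil {s_sorted t_pos t_ge_y predK} => [|x t] //= _.
  by rewrite /perimeter /= !size_rcons size_map size_rcons => ? /andP[? _]; lia.
Qed.

Lemma mem_perim_enum n s : (s \in perim_enum n) = perim_part n s.
Proof.
elim: n s => [|[|n] IHn] s.
- rewrite in_nil; case: s => [|x s] //; apply/esym/negbTE.
  by apply/negP => /and3P[_ /andP[_ /andP[x_pos _]]]; rewrite /perimeter /=; lia.
- rewrite inE; apply/eqP/idP => [-> // | /and3P[]].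
  case: s => [|x [|y s]] //= _ /andP[_ /andP[x_pos _]]; rewrite /perimeter /=.
    by move=> /eqP x1; congr [:: _]; lia.
  by lia.
- apply/idP/idP.
  + rewrite perim_enumSS mem_cat => /orP[] /mapP[t + ->]; rewrite IHn.
      exact: perim_part_rcons1.
    exact: perim_part_map_succn.
  + case/perim_partSS_inv => -[t t_part ->]; rewrite perim_enumSS mem_cat.
      by rewrite (map_f (fun s => rcons s 1)) // IHn.
    by rewrite (map_f (map succn)) ?orbT // IHn.
Qed.

Lemma notin1_map_succn s : all (fun x => 0 < x) s -> 1 \notin map succn s.
Proof. by move=> s_pos; apply/mapP => -[z /(allP s_pos) + /succn_inj z0]; rewrite -z0. Qed.

Lemma uniq_perim_enum n : uniq (perim_enum n).
Proof.
elim: n => [|[|n] IHn] //.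
rewrite perim_enumSS cat_uniq map_inj_uniq; last exact: rcons_injl.
rewrite map_inj_uniq; last exact: inj_map succn_inj.
rewrite IHn andbT; apply/hasPn => _ /mapP[t t_in ->].
apply/negP => /mapP[u _ tu].
have : 1 \notin map succn t by apply/notin1_map_succn/(@perim_part_pos n.+1); rewrite -mem_perim_enum.
by rewrite tu mem_rcons mem_head.
Qed.

Lemma mem_seqs_upto k b s :
  (s \in seqs_upto k b) = (size s <= k) && all (fun x => 0 < x <= b) s.
Proof.
elim: k s => [|k IHk] [|x s] //=; rewrite inE /= ltnS.
apply/allpairsP/idP => [[[y t]] /= [y_in t_in [-> ->]] | /and3P[s_size x_in s_in]].
  by move: y_in t_in; rewrite mem_iota IHk => ? /andP[-> ->]; rewrite andbT; lia.
by exists (x, s); rewrite mem_iota IHk s_size s_in; split => //; lia.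
Qed.

Lemma uniq_seqs_upto k b : uniq (seqs_upto k b).
Proof.
elim: k => [|k IHk] //=.
rewrite allpairs_uniq ?iota_uniq ?IHk ?andbT //; last by move=> [? ?] [? ?] _ _ [-> ->].
by apply/negP => /allpairsP[[y t]] [].
Qed.

Lemma mem_parts_perim M s : (s \in parts_perim M) = perim_part M s.
Proof.
rewrite mem_filter andb_idr // => /and3P[+ /andP[+ s_pos] /eqP].
case: s s_pos => [|x s] //= /andP[x_pos s_pos] _ /(order_path_min (rev_trans leq_trans)) s_le_x.
rewrite /perimeter /= mem_seqs_upto /= => s_perim.
apply/and3P; split; [lia | lia |].
by apply/allP => z z_in; have := allP s_le_x z z_in; have := allP s_pos z z_in; lia.
Qed.

Lemma perm_parts_perim M : perm_eq (parts_perim M) (perim_enum M).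
Proof.
apply: uniq_perm; [exact/filter_uniq/uniq_seqs_upto | exact: uniq_perim_enum |].
by move=> s; rewrite mem_parts_perim mem_perim_enum.
Qed.

Definition psum (n : nat) (F : seq nat -> nat) : nat := \sum_(s <- perim_enum n) F s.

Lemma psum_parts_perim M F : \sum_(s <- parts_perim M) F s = psum M F.
Proof. exact: perm_big (perm_parts_perim M). Qed.

Lemma psumSS n F :
  psum n.+2 F = psum n.+1 (fun s => F (rcons s 1)) + psum n.+1 (fun s => F (map succn s)).
Proof. by rewrite /psum perim_enumSS big_cat !big_map. Qed.

Lemma psumSSS n F :
  psum n.+3 F = psum n.+2 (fun s => F (map succn s))
    + psum n.+1 (fun s => F (rcons (rcons s 1) 1))
    + psum n.+1 (fun s => F (rcons (map succn s) 1)).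
Proof. by rewrite psumSS (psumSS n (fun s => F (rcons s 1))) addnC addnA. Qed.

Lemma eq_psum n F G :
  (forall s, all (fun x => 0 < x) s -> F s = G s) -> psum n F = psum n G.
Proof. by move=> FG; apply: eq_big_seq => s; rewrite mem_perim_enum => /perim_part_pos /FG. Qed.
Arguments eq_psum : clear implicits.

Lemma psum0 n : psum n (fun _ => 0) = 0.
Proof. exact: big1. Qed.

Lemma psumD n F G : psum n (fun s => F s + G s) = psum n F + psum n G.
Proof. exact: big_split. Qed.

Lemma psum1 F : psum 1 F = F [:: 1].
Proof. by rewrite /psum big_seq1. Qed.

Lemma psum2 F : psum 2 F = F [:: 1; 1] + F [:: 2].
Proof. by rewrite /psum /= big_cons big_seq1. Qed.

Lemma fib_unique (u : nat -> nat) : u 1 = 1 -> u 2 = 1 ->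
  (forall n, u n.+3 = u n.+2 + u n.+1) -> forall n, u n.+1 = fib n.+1.
Proof.
move=> u1 u2 uSSS n; suff : u n.+1 = fib n.+1 /\ u n.+2 = fib n.+2 by case.
by elim: n => [|n [IH1 IH2]] //; rewrite uSSS IH1 IH2.
Qed.

Lemma count_rcons (T : Type) (a : pred T) s x : count a (rcons s x) = count a s + a x.
Proof. by rewrite -cats1 count_cat /= addn0. Qed.

Lemma all_odd_map_succn2 s : all odd (map succn (map succn s)) = all odd s.
Proof. by rewrite -map_comp all_map; apply: eq_all => x /=; rewrite negbK. Qed.

Lemma psum_all_oddSSS n :
  psum n.+3 (fun s => all odd s) = psum n.+2 (fun s => all odd s) + psum n.+1 (fun s => all odd s).
Proof.
rewrite psumSS (psumSS n (fun s => all odd (map succn s))).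
rewrite (eq_psum _ (fun s => all odd (rcons s 1)) (fun s => all odd s)); last first.
  by move=> s _; rewrite all_rcons.
rewrite (eq_psum _ (fun s => all odd (map succn (rcons s 1))) (fun _ => 0)); last first.
  by move=> s _; rewrite map_rcons all_rcons.
rewrite (eq_psum _ (fun s => all odd (map succn (map succn s))) (fun s => all odd s)); last first.
  by move=> s _; rewrite all_odd_map_succn2.
by rewrite psum0.
Qed.

Lemma psum_all_odd n : psum n.+1 (fun s => all odd s) = fib n.+1.
Proof.
apply: (fib_unique (u := fun n => psum n (fun s => all odd s))) => //.
- by rewrite psum1.
- by rewrite psum2.
- exact: psum_all_oddSSS.
Qed.

Lemma psum_all_odd_sizeSSS n :
  psum n.+3 (fun s => all odd s * size s) =
  psum n.+2 (fun s => all odd s * size s) + psum n.+2 (fun s => all odd s)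
  + psum n.+1 (fun s => all odd s * size s).
Proof.
rewrite psumSS (psumSS n (fun s => all odd (map succn s) * size (map succn s))).
rewrite (eq_psum _ (fun s => all odd (rcons s 1) * size (rcons s 1))
                   (fun s => all odd s * size s + all odd s)); last first.
  by move=> s _; rewrite all_rcons size_rcons mulnS addnC.
rewrite (eq_psum _ (fun s => all odd (map succn (rcons s 1)) * size (map succn (rcons s 1)))
                   (fun _ => 0)); last first.
  by move=> s _; rewrite map_rcons all_rcons.
rewrite (eq_psum _ (fun s => all odd (map succn (map succn s)) * size (map succn (map succn s)))
                   (fun s => all odd s * size s)); last first.
  by move=> s _; rewrite all_odd_map_succn2 !size_map.
by rewrite psumD psum0.
Qed.

Lemma uniq_rcons_map_succn1 s :
  all (fun x => 0 < x) s -> uniq (rcons (map succn s) 1) = uniq s.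
Proof. by move=> s_pos; rewrite rcons_uniq notin1_map_succn // (map_inj_uniq succn_inj). Qed.

Lemma uniq_rcons2 (T : eqType) (s : seq T) x : uniq (rcons (rcons s x) x) = false.
Proof. by rewrite rcons_uniq mem_rcons mem_head. Qed.

Lemma psum_uniqSSS n :
  psum n.+3 (fun s => uniq s) = psum n.+2 (fun s => uniq s) + psum n.+1 (fun s => uniq s).
Proof.
rewrite psumSSS.
rewrite (eq_psum _ (fun s => uniq (map succn s)) (fun s => uniq s)); last first.
  by move=> s _; rewrite (map_inj_uniq succn_inj).
rewrite (eq_psum _ (fun s => uniq (rcons (rcons s 1) 1)) (fun _ => 0)); last first.
  by move=> s _; rewrite uniq_rcons2.
rewrite (eq_psum _ (fun s => uniq (rcons (map succn s) 1)) (fun s => uniq s)); last first.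
  by move=> s /uniq_rcons_map_succn1 ->.
by rewrite psum0 addn0.
Qed.

Lemma psum_uniq n : psum n.+1 (fun s => uniq s) = fib n.+1.
Proof.
apply: (fib_unique (u := fun n => psum n (fun s => uniq s))) => //.
- by rewrite psum1.
- by rewrite psum2.
- exact: psum_uniqSSS.
Qed.

Lemma psum_uniq_sizeSSS n :
  psum n.+3 (fun s => uniq s * size s) =
  psum n.+2 (fun s => uniq s * size s) + psum n.+1 (fun s => uniq s * size s)
  + psum n.+1 (fun s => uniq s).
Proof.
rewrite psumSSS.
rewrite (eq_psum _ (fun s => uniq (map succn s) * size (map succn s))
                   (fun s => uniq s * size s)); last first.
  by move=> s _; rewrite (map_inj_uniq succn_inj) size_map.
rewrite (eq_psum _ (fun s => uniq (rcons (rcons s 1) 1) * size (rcons (rcons s 1) 1))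
                   (fun _ => 0)); last first.
  by move=> s _; rewrite uniq_rcons2.
rewrite (eq_psum _ (fun s => uniq (rcons (map succn s) 1) * size (rcons (map succn s) 1))
                   (fun s => uniq s * size s + uniq s)); last first.
  by move=> s /uniq_rcons_map_succn1 ->; rewrite size_rcons size_map mulnS addnC.
by rewrite psum0 addn0 psumD addnA.
Qed.

Lemma size_undup_rcons_eq1 (T : eqType) (s : seq T) x :
  (size (undup (rcons s x)) == 1) = all (pred1 x) s.
Proof.
apply/idP/allP => [| s_x].
  case u_def: (undup (rcons s x)) => [|y [|z u]] // _.
  have mem_y w : (w \in rcons s x) = (w == y) by rewrite -mem_undup u_def inE.
  have xy : x = y by apply/eqP; rewrite -mem_y mem_rcons mem_head.
  by move=> w w_in; rewrite /= xy -mem_y mem_rcons inE w_in orbT.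
have /perm_size -> // : perm_eq (undup (rcons s x)) [:: x].
apply: uniq_perm; rewrite ?undup_uniq // => w.
by rewrite mem_undup mem_rcons !inE; apply/orP/eqP => [[/eqP | /s_x /eqP] | ->]; auto.
Qed.

Lemma psum_odd_parts_eq1SS n :
  psum n.+2 (fun s => all (fun x => odd x ==> (x == 1)) s) =
  psum n.+1 (fun s => all (fun x => odd x ==> (x == 1)) s) + psum n.+1 (fun s => all odd s).
Proof.
rewrite psumSS (eq_psum _ (fun s => all (fun x => odd x ==> (x == 1)) (rcons s 1))
                          (fun s => all (fun x => odd x ==> (x == 1)) s)); last first.
  by move=> s _; rewrite all_rcons.
congr (_ + _); apply: eq_psum => s s_pos; rewrite all_map.
by congr (nat_of_bool _); apply: eq_in_all => -[|x] /(allP s_pos) //= _; case: odd.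
Qed.

Lemma psum_odd_parts_eq1 n :
  psum n.+1 (fun s => all (fun x => odd x ==> (x == 1)) s) = fib n.+2.
Proof.
elim: n => [|n IHn]; first by rewrite psum1.
by rewrite psum_odd_parts_eq1SS IHn psum_all_odd.
Qed.

Lemma psum_in_G1SSS n :
  psum n.+3 (fun s => in_G1 s) = psum n.+2 (fun s => in_G1 s) + psum n.+1 (fun s => in_G1 s)
  + psum n.+1 (fun s => all (fun x => odd x ==> (x == 1)) s).
Proof.
rewrite psumSS (psumSS n (fun s => in_G1 (map succn s))).
rewrite (eq_psum _ (fun s => in_G1 (rcons s 1)) (fun s => in_G1 s)); last first.
  by move=> s _; rewrite /in_G1 filter_rcons.
rewrite (eq_psum _ (fun s => in_G1 (map succn (rcons s 1)))
                   (fun s => all (fun x => odd x ==> (x == 1)) s)); last first.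
  move=> s _; rewrite /in_G1 map_rcons filter_rcons /= size_undup_rcons_eq1 all_filter all_map.
  by congr (nat_of_bool _); apply: eq_all => x /=; rewrite negbK eqSS.
rewrite (eq_psum _ (fun s => in_G1 (map succn (map succn s))) (fun s => in_G1 s)); last first.
  move=> s _; rewrite /in_G1 -map_comp filter_map undup_map_inj; last first.
    by move=> a b [].
  rewrite size_map; congr (nat_of_bool (size (undup _) == 1)).
  by apply: eq_filter => x /=; rewrite negbK.
lia.
Qed.

Section RepeatedValues.

Variable T : eqType.
Implicit Types (s t : seq T) (x : T).

Definition nrep s : nat := count (fun v => 1 < count_mem v s) (undup s).

Lemma perm_nrep s t : perm_eq s t -> nrep s = nrep t.
Proof.
move=> st; have undup_st : perm_eq (undup s) (undup t).
  by apply: uniq_perm; rewrite ?undup_uniq // => x; rewrite !mem_undup (perm_mem st).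
by rewrite /nrep (permP undup_st); apply: eq_count => v; rewrite (permP st).
Qed.

Lemma nrep_cons x t : nrep (x :: t) = nrep t + (count_mem x t == 1).
Proof.
rewrite /nrep /=; have [x_in | x_notin] := boolP (x \in t).
  have /permP perm_x : perm_eq (undup t) (x :: rem x (undup t)).
    by apply: perm_to_rem; rewrite mem_undup.
  rewrite perm_x perm_x /= eqxx.
  rewrite (eq_in_count (s := rem x (undup t)) (a2 := fun v => 1 < count_mem v t)); last first.
    move=> v; rewrite rem_filter ?undup_uniq // mem_filter /= => /andP[vx _].
    by rewrite eq_sym (negbTE vx).
  have : 0 < count_mem x t by rewrite -has_count has_pred1.
  by case: (count_mem x t) => [|[|m]] //= _; lia.
rewrite /= eqxx !(count_memPn x_notin) /= addn0; apply: eq_in_count => v.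
by rewrite mem_undup => v_in; case: eqP => // xv; rewrite xv v_in in x_notin.
Qed.

Lemma nrep_rcons x t : nrep (rcons t x) = nrep t + (count_mem x t == 1).
Proof. by rewrite (@perm_nrep _ (x :: t)) ?perm_rcons ?nrep_cons. Qed.

Lemma nrep_eq0 s : (nrep s == 0) = uniq s.
Proof.
rewrite /nrep -leqn0 leqNgt -has_count; apply/hasPn/idP => [no_rep | s_uniq v _].
  apply: count_mem_uniq => x; have [x_in | x_notin] := boolP (x \in s); last first.
    by rewrite (count_memPn x_notin).
  have : 0 < count_mem x s by rewrite -has_count has_pred1.
  by have := no_rep x; rewrite mem_undup -leqNgt => /(_ x_in); lia.
by rewrite count_uniq_mem //; case: (v \in s).
Qed.

End RepeatedValues.

Lemma nrep_map_inj (T U : eqType) (f : T -> U) (s : seq T) :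
  injective f -> nrep (map f s) = nrep s.
Proof.
move=> f_inj; rewrite /nrep undup_map_inj // count_map; apply: eq_count => v /=.
by rewrite count_map; congr (1 < _); apply: eq_count => w /=; rewrite inj_eq.
Qed.

Lemma nrep_rcons_map_succn1 s :
  all (fun x => 0 < x) s -> nrep (rcons (map succn s) 1) = nrep s.
Proof.
move=> s_pos; rewrite nrep_rcons nrep_map_inj //; last exact: succn_inj.
by rewrite (count_memPn (notin1_map_succn s_pos)) addn0.
Qed.

Lemma psum_nrep11SS n :
  psum n.+2 (fun s => nrep (rcons (rcons s 1) 1) == 1) =
  psum n.+1 (fun s => nrep (rcons (rcons s 1) 1) == 1) + psum n.+1 (fun s => uniq s).
Proof.
rewrite psumSS (eq_psum _ (fun s => nrep (rcons (rcons (rcons s 1) 1) 1) == 1)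
                          (fun s => nrep (rcons (rcons s 1) 1) == 1)); last first.
  by move=> s _; rewrite [nrep (rcons _ 1)]nrep_rcons !count_rcons /= !addn1 addn0.
congr (_ + _); apply: eq_psum => s s_pos.
rewrite nrep_rcons nrep_rcons_map_succn1 // count_rcons.
by rewrite (count_memPn (notin1_map_succn s_pos)) addn1 eqSS nrep_eq0.
Qed.

Lemma psum_nrep11 n : psum n.+1 (fun s => nrep (rcons (rcons s 1) 1) == 1) = fib n.+2.
Proof.
elim: n => [|n IHn]; first by rewrite psum1.
by rewrite psum_nrep11SS IHn psum_uniq.
Qed.

Lemma psum_in_H1SSS n :
  psum n.+3 (fun s => in_H1 s) = psum n.+2 (fun s => in_H1 s) + psum n.+1 (fun s => in_H1 s)
  + psum n.+1 (fun s => nrep (rcons (rcons s 1) 1) == 1).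
Proof.
rewrite psumSSS.
rewrite (eq_psum _ (fun s => in_H1 (map succn s)) (fun s => in_H1 s)); last first.
  by move=> s _; rewrite /in_H1 -/(nrep _) nrep_map_inj //; exact: succn_inj.
rewrite (eq_psum _ (fun s => in_H1 (rcons (map succn s) 1)) (fun s => in_H1 s)); last first.
  by move=> s s_pos; rewrite /in_H1 -!/(nrep _) nrep_rcons_map_succn1.
by rewrite addnAC.
Qed.

Lemma sum_parts_perim_filter M (P : pred (seq nat)) (F : seq nat -> nat) :
  \sum_(s <- parts_perim M | P s) F s = psum M (fun s => P s * F s).
Proof.
rewrite big_mkcond psum_parts_perim; apply: eq_psum => s _.
by case: (P s); rewrite ?mul1n.
Qed.

Lemma g_psum M : g M = psum M (fun s => all odd s * size s).
Proof. by rewrite /g sumnE big_map big_filter sum_parts_perim_filter. Qed.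

Lemma h_psum M : h M = psum M (fun s => uniq s * size s).
Proof. by rewrite /h sumnE big_map big_filter sum_parts_perim_filter. Qed.

Lemma count_parts_perim M (P : pred (seq nat)) :
  size [seq s <- parts_perim M | P s] = psum M (fun s => P s).
Proof.
rewrite size_filter -sum1_count sum_parts_perim_filter.
by apply: eq_psum => s _; rewrite muln1.
Qed.

Theorem mainTheorem5 (M : nat) : 2 <= M ->
  [/\ g M = g (M - 1) + g (M - 2) + fib (M - 1),
      h M = h (M - 1) + h (M - 2) + fib (M - 2),
      g1 M = g1 (M - 1) + g1 (M - 2) + fib (M - 1) &
      h1 M = h1 (M - 1) + h1 (M - 2) + fib (M - 1)].
Proof.
case: M => [|[|[|n]]] // _; rewrite !subSS !subn0 !g_psum !h_psum.
rewrite /g1 /h1 !count_parts_perim; split.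
- by rewrite psum_all_odd_sizeSSS psum_all_odd addnAC.
- by rewrite psum_uniq_sizeSSS psum_uniq.
- by rewrite psum_in_G1SSS psum_odd_parts_eq1.
- by rewrite psum_in_H1SSS psum_nrep11.
Qed.
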